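(* Every three-dimensional empirical copula is simplified.
   Context: $\mathbb{I}=[0,1]$, $\lambda$ Lebesgue measure; points of $\mathbb{I}^3$ are written $(\mathbf{u},v)$, $\mathbf{u}=(u_1,u_2)$. The (three-dimensional) empirical copula of a sample $(\mathbf{X}_1,Y_1),\dots,(\mathbf{X}_n,Y_n)$ of a random vector with continuous univariate marginals and without ties is the copula obtained by trilinear interpolation of the empirical subcopula; equivalently, there are permutations $\sigma_1,\sigma_2$ of $\{1,\dots,n\}$ such that its density is $\hat c_n(u_1,u_2,v)=n^2\sum_{i=1}^n\mathbf{1}_{I_i^1}(u_1)\mathbf{1}_{I_i^2}(u_2)\mathbf{1}_{V_i}(v)$ with $I_i^k=((\sigma_k(i)-1)/n,\sigma_k(i)/n]$ and $V_i=((i-1)/n,i/n]$. For a three-dimensional copula $C$, its Markov kernel $K_C$ is (a version of) the regular conditional distribution of $(U_1,U_2)$ given $U_3=v$, $(U_1,U_2,U_3)\sim C$, and $F_{1|3}(u_1|t)=K_C(t,[0,u_1]\times\mathbb{I})$, $F_{2|3}(u_2|t)=K_C(t,\mathbb{I}\times[0,u_2])$. $C$ is generalized simplified if there is a bivariate copula $A$ with $C(\mathbf{u},v)=\int_{[0,v]}A(F_{1|3}(u_1|t),F_{2|3}(u_2|t))\,d\lambda(t)$ for all $(\mathbf{u},v)$; $C$ is simplified if it is generalized simplified and, for $\lambda$-a.e. $t$, the functions $F_{1|3}(\cdot|t)$ and $F_{2|3}(\cdot|t)$ are continuous. *)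

From HB Require Import structures.
From mathcomp Require Import all_boot all_order all_algebra all_fingroup.
From mathcomp Require Import all_classical all_reals all_analysis.
Set Implicit Arguments. Unset Strict Implicit. Unset Printing Implicit Defensive.
Import Order.TTheory GRing.Theory Num.Theory.
Import numFieldNormedType.Exports.
Local Open Scope classical_set_scope.
Local Open Scope ring_scope.

Section copulas.
Variable R : realType.
Notation lam := (@lebesgue_measure R).

Definition Icc (a b : R) : set R := `[a, b].

Definition lamR (A : set R) : R := fine (lam A).

(* [0,x] ∩ ((a-1)/n, a/n]  with 1-based a; here a is 0-based: (a/n, (a+1)/n] *)
Definition cellR (n a : nat) (x : R) : R :=
  lamR (`[0, x] `&` `]a%:R / n%:R, a.+1%:R / n%:R]).

(* The 3-dimensional empirical copula given by permutations s1, s2 of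
   {0,..,n-1} (0-based version of {1,..,n}):
   C(u1,u2,v) = int_{[0,u1]x[0,u2]x[0,v]} n^2 sum_i 1_{I_i^1} 1_{I_i^2} 1_{V_i}
              = n^2 sum_i lam([0,u1]∩I_i^1) lam([0,u2]∩I_i^2) lam([0,v]∩V_i). *)
Definition empirical_copula (n : nat) (s1 s2 : {perm 'I_n})
    (u1 u2 v : R) : R :=
  n%:R ^+ 2 * \sum_(i < n)
     (cellR n (s1 i) u1 * cellR n (s2 i) u2 * cellR n i v).

Definition copula2 (A : R -> R -> R) : Prop :=
  [/\ (forall x, 0 <= x <= 1 -> A x 0 = 0 /\ A 0 x = 0),
      (forall x, 0 <= x <= 1 -> A x 1 = x /\ A 1 x = x) &
      (forall x1 x2 y1 y2, 0 <= x1 -> x1 <= x2 -> x2 <= 1 ->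
          0 <= y1 -> y1 <= y2 -> y2 <= 1 ->
          0 <= A x2 y2 - A x2 y1 - A x1 y2 + A x1 y1)].

(* K is (a version of) the Markov kernel of the 3-dim copula C, i.e. the
   regular conditional distribution of (U1,U2) given U3 = t, characterized
   on the generating rectangles:
   P(U1 <= u1, U2 <= u2, U3 <= v) = int_{[0,v]} K(t,[0,u1]x[0,u2]) dt. *)
Definition markov_kernel_of (C : R -> R -> R -> R)
    (K : R.-pker R ~> (R * R)%type) : Prop :=
  forall u1 u2 v, 0 <= u1 <= 1 -> 0 <= u2 <= 1 -> 0 <= v <= 1 ->
    (C u1 u2 v)%:E =
      (\int[lam]_(t in Icc 0 v) K t (Icc 0 u1 `*` Icc 0 u2))%E.

Definition F13 (K : R.-pker R ~> (R * R)%type) (u1 t : R) : R :=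
  fine (K t (`[0, u1] `*` `[0, 1])).
Definition F23 (K : R.-pker R ~> (R * R)%type) (u2 t : R) : R :=
  fine (K t (`[0, 1] `*` `[0, u2])).

Definition gen_simplified_wrt (C : R -> R -> R -> R)
    (K : R.-pker R ~> (R * R)%type) : Prop :=
  exists A, copula2 A /\
    forall u1 u2 v, 0 <= u1 <= 1 -> 0 <= u2 <= 1 -> 0 <= v <= 1 ->
      (C u1 u2 v)%:E =
        (\int[lam]_(t in Icc 0 v) (A (F13 K u1 t) (F23 K u2 t))%:E)%E.

Definition simplified (C : R -> R -> R -> R) : Prop :=
  exists K : R.-pker R ~> (R * R)%type,
    [/\ markov_kernel_of C K, gen_simplified_wrt C K &
      {ae lam, forall t, 0 <= t <= 1 ->
         {within `[0, 1], continuous (fun u => F13 K u t)} /\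
         {within `[0, 1], continuous (fun u => F23 K u t)}}].

End copulas.

From HB Require Import structures.
From mathcomp Require Import all_boot all_order all_algebra all_fingroup.
From mathcomp Require Import all_classical all_reals all_analysis measurable_realfun.
From mathcomp Require Import ring.

(* Conditionally on [U3 = t] with [t] in the cell [V_i], the density of the
   empirical copula is uniform on the square [I_i^1 x I_i^2].  So the Markov
   kernel [K(t, .)] is the product of the uniform laws on [I_i^1] and [I_i^2]:
   [K(t, [0,u1] x [0,u2]) = F_{1|3}(u1|t) F_{2|3}(u2|t)], and the empirical copula
   is generalized simplified with the product copula.  Each [F_{k|3}(.|t)] is the
   distribution function of a uniform law on an interval, hence continuous. *)

Set Implicit Arguments. Unset Strict Implicit. Unset Printing Implicit Defensive.
Import Order.TTheory GRing.Theory Num.Theory.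
Import numFieldNormedType.Exports.
Local Open Scope classical_set_scope.
Local Open Scope ring_scope.

Section cells.
Variable R : realType.
Local Notation lam := (@lebesgue_measure R).

Definition cell (n k : nat) : set R := `]k%:R / n%:R, k.+1%:R / n%:R].

Lemma cellE n k t : cell n k t = (k%:R / n%:R < t <= k.+1%:R / n%:R).
Proof. by rewrite /cell /= in_itv. Qed.

Lemma measurable_cell n k : measurable (cell n k).
Proof. exact: measurable_itv. Qed.

Lemma cell_gt0 n k t : cell n k t -> 0 < t.
Proof. by rewrite cellE => /andP[+ _]; apply: le_lt_trans; rewrite divr_ge0. Qed.

Lemma cell_le1 n k t : (k < n)%N -> cell n k t -> t <= 1.
Proof.
move=> kn; rewrite cellE => /andP[_ /le_trans]; apply.
by rewrite ler_pdivrMr ?ltr0n ?(leq_ltn_trans _ kn) // mul1r ler_nat.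
Qed.

Lemma cell_inj n i j t : cell n i t -> cell n j t -> i = j.
Proof.
move=> ci cj; have n_gt0 : 0 < n%:R :> R.
  rewrite lt0r ler0n andbT; apply/negP => /eqP n0; move: ci (cell_gt0 ci).
  by rewrite cellE n0 invr0 !mulr0 => /andP[_ /le_lt_trans lt_t /lt_t]; rewrite ltxx.
move: ci cj; rewrite !cellE => /andP[lt_it le_ti] /andP[lt_jt le_tj].
have := lt_le_trans lt_it le_tj; have := lt_le_trans lt_jt le_ti.
rewrite !ltr_pM2r ?invr_gt0 // !ltr_nat !ltnS => le_ji le_ij.
by apply/eqP; rewrite eqn_leq le_ij le_ji.
Qed.

Lemma cell_cover n t : (0 < n)%N -> 0 < t <= 1 -> exists2 k, (k < n)%N & cell n k t.
Proof.
move=> n_gt0 /andP[t_gt0 t_le1].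
have n_gt0' : 0 < n%:R :> R by rewrite ltr0n.
have ex_k : exists k, t <= k%:R / n%:R by exists n; rewrite divff ?gt_eqF.
case: (ex_minnP ex_k) => -[|k] le_tk k_min.
  by move: le_tk; rewrite mul0r => /(lt_le_trans t_gt0); rewrite ltxx.
exists k; first by apply: k_min; rewrite divff ?gt_eqF.
by rewrite cellE le_tk andbT ltNge; apply/negP => /k_min; rewrite ltnn.
Qed.

Lemma lebesgue_measure_Icc0_Ioc (x a b : R) : 0 <= a ->
  lam (`[0, x] `&` `]a, b]) = (Num.max 0 (Num.min x b - a))%:E.
Proof.
move=> a_ge0; have -> : `[0, x] `&` `]a, b] = `]a, Num.min x b]%classic :> set R.
  apply/seteqP; split => t /=; rewrite !in_itv /= le_min.
    by case => /andP[_ ->] /andP[-> ->].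
  case/and3P => lt_at le_tx le_tb.
  by rewrite lt_at le_tx le_tb (le_trans a_ge0 (ltW lt_at)).
rewrite lebesgue_measure_itv /= lte_fin; case: ifPn => h.
  by rewrite -EFinD; congr (_%:E); apply/esym/max_idPr; rewrite subr_ge0 ltW.
by congr (_%:E); apply/esym/max_idPl; rewrite subr_le0 leNgt.
Qed.

Lemma lebesgue_measure_Icc0_cell n k (x : R) :
  lam (`[0, x] `&` cell n k) = (cellR n k x)%:E.
Proof. by rewrite /cellR /lamR /cell lebesgue_measure_Icc0_Ioc ?divr_ge0. Qed.

Lemma cellRE n k (x : R) :
  cellR n k x = Num.max 0 (Num.min x (k.+1%:R / n%:R) - k%:R / n%:R).
Proof. by rewrite /cellR /lamR lebesgue_measure_Icc0_Ioc ?divr_ge0. Qed.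

Lemma cellR_ge0 n k (x : R) : 0 <= cellR n k x.
Proof. by rewrite cellRE le_max lexx. Qed.

Lemma cellR1 n k : (k < n)%N -> n%:R * cellR n k 1 = 1 :> R.
Proof.
move=> kn; have n_gt0 : 0 < n%:R :> R by rewrite ltr0n (leq_ltn_trans _ kn).
have le_k1 : k.+1%:R / n%:R <= 1 :> R by rewrite ler_pdivrMr // mul1r ler_nat.
rewrite cellRE (min_idPr le_k1) -mulrBl -natrB // subSnn mul1r.
by rewrite (max_idPr _) ?invr_ge0 ?ltW // divff ?gt_eqF.
Qed.

Lemma continuous_cellR n k : continuous (@cellR R n k).
Proof.
have -> : @cellR R n k = (fun=> 0) \max
    ((idfun \min fun=> k.+1%:R / n%:R) \- fun=> k%:R / n%:R).
  by apply/funext => x; rewrite cellRE.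
move=> x; apply: continuous_max; first exact: cvg_cst.
apply: cvgB; last exact: cvg_cst.
by apply: continuous_min; [exact: cvg_id | exact: cvg_cst].
Qed.

End cells.

Section cell_uniform.
Variable R : realType.

(* [lebesgue_measure] is typed over [measurableTypeR R]; measures built from
   this copy live on [R] itself, as kernels from [R] to [R * R] require. *)
Definition lebesgueR : set R -> \bar R := lebesgue_measure.
HB.instance Definition _ := isMeasure.Build _ R R lebesgueR
  (measure0 (@lebesgue_measure R)) (@measure_ge0 _ _ _ (@lebesgue_measure R))
  (@measure_semi_sigma_additive _ _ _ (@lebesgue_measure R)).

Variables n k : nat.

Definition cell_uniform :=
  mscale n.+1%:R%:nng (mrestr lebesgueR (@measurable_cell R n.+1 k)).
HB.instance Definition _ := Measure.on cell_uniform.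

Lemma cell_uniform_setT : cell_uniform setT = 1%E.
Proof.
rewrite /cell_uniform /mscale /= /mrestr /lebesgueR setTI /cell.
have n_gt0 : 0 < n.+1%:R :> R by rewrite ltr0n.
rewrite lebesgue_measure_itv /= lte_fin ltr_pM2r ?invr_gt0 // ltr_nat ltnSn.
by rewrite -EFinD -EFinM -mulrBl -natrB // subSnn mul1r divff ?gt_eqF.
Qed.

HB.instance Definition _ :=
  Measure_isProbability.Build _ _ _ cell_uniform cell_uniform_setT.

Lemma cell_uniform_Icc0 (x : R) :
  cell_uniform `[0, x] = (n.+1%:R * cellR n.+1 k x)%:E.
Proof.
by rewrite /cell_uniform /mscale /= /mrestr /lebesgueR lebesgue_measure_Icc0_cell.
Qed.

End cell_uniform.

Section cell_index.
Variables (R : realType) (n : nat).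
Local Notation lam := (@lebesgue_measure R).

(* No cell contains [t] outside ]0, 1]; the default [ord0] there only serves
   to make the kernel below a probability at every [t]. *)
Definition cell_index (t : R) : 'I_n.+1 :=
  odflt ord0 [pick i : 'I_n.+1 | `[< cell n.+1 i t >] ].

Lemma cell_index_eq (i : 'I_n.+1) t : cell n.+1 i t -> cell_index t = i.
Proof.
move=> cit; rewrite /cell_index; case: pickP => [j /asboolP cjt | /(_ i)] /=.
  exact/val_inj/(cell_inj cjt cit).
by rewrite asboolT.
Qed.

Lemma cell_indexP t : 0 < t <= 1 -> cell n.+1 (cell_index t) t.
Proof.
case/(cell_cover (ltn0Sn n)) => k kn ckt.
by rewrite (cell_index_eq (i := Ordinal kn)).
Qed.

Lemma cell_index_out t : ~ (0 < t <= 1) -> cell_index t = ord0.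
Proof.
move=> t_out; rewrite /cell_index; case: pickP => [j /asboolP cjt|] //=.
by case: t_out; rewrite (cell_gt0 cjt) (cell_le1 (ltn_ord j) cjt).
Qed.

Lemma measurable_cell_index_fiber i : measurable (cell_index @^-1` [set i]).
Proof.
have -> : cell_index @^-1` [set i] =
    cell n.+1 i `|` (if i == ord0 then ~` `]0, 1]%classic else set0).
  apply/seteqP; split => t /=.
    move=> <-; have [t01|t_out] := pselect (0 < t <= 1).
      by left; exact: cell_indexP.
    by right; rewrite cell_index_out // eqxx /= in_itv /=; exact/negP.
  case=> [|]; first exact: cell_index_eq.
  case: eqP => // -> /= t_out; apply: cell_index_out => t01; apply: t_out.
  by rewrite in_itv.
apply: measurableU; first exact: measurable_cell.
by case: ifPn => _ //; apply: measurableC; exact: measurable_itv.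
Qed.

Lemma measurable_fun_cell_index (h : 'I_n.+1 -> \bar R) :
  measurable_fun setT (fun t => h (cell_index t)).
Proof.
have -> : (fun t => h (cell_index t)) =
    (fun t => \sum_(i < n.+1) h i * (\1_(cell_index @^-1` [set i]) t)%:E)%E.
  apply/funext => t /=; rewrite (bigD1 (cell_index t)) //= indicE mem_set //.
  rewrite mule1 big1 ?adde0 // => i ne_i.
  by rewrite indicE memNset ?mule0 //= => /esym eq_i; rewrite eq_i eqxx in ne_i.
apply: emeasurable_sum => i; apply: measurable_funeM.
by apply/measurable_EFinP; exact: measurable_indic (measurable_cell_index_fiber i).
Qed.

Lemma cell_index_sum_indic (g : 'I_n.+1 -> R) t : 0 < t <= 1 ->
  g (cell_index t) = \sum_(i < n.+1) g i * \1_(cell n.+1 i) t.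
Proof.
move=> t01; rewrite (bigD1 (cell_index t)) //= indicE mem_set; last first.
  exact: cell_indexP.
rewrite mulr1 big1 ?addr0 // => i ne_i; rewrite indicE memNset ?mulr0 //.
by move=> /cell_index_eq eq_i; rewrite eq_i eqxx in ne_i.
Qed.

Lemma integral_cell_index (g : 'I_n.+1 -> R) (v : R) :
  (forall i, 0 <= g i) -> 0 <= v <= 1 ->
  (\int[lam]_(t in Icc 0 v) (g (cell_index t))%:E)%E =
  (\sum_(i < n.+1) g i * cellR n.+1 i v)%:E.
Proof.
move=> g_ge0 /andP[_ v_le1].
rewrite /Icc -integral_itv_obnd_cbnd; last first.
  apply: measurable_funTS.
  exact: (measurable_fun_cell_index (fun i => (g i)%:E)).
under eq_integral => t.
  rewrite inE /= in_itv /= => /andP[t_gt0 le_tv].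
  rewrite cell_index_sum_indic ?t_gt0 ?(le_trans le_tv v_le1) // -sumEFin.
  under eq_bigr do rewrite EFinM.
  over.
rewrite ge0_integral_sum //; last 2 first.
- move=> i; apply: measurable_funeM.
  by apply/measurable_EFinP; exact: measurable_indic (measurable_cell _ _).
- by move=> i t _; rewrite mule_ge0 ?lee_fin.
rewrite -sumEFin; apply: eq_bigr => i _.
rewrite ge0_integralZl ?lee_fin //; last first.
  by apply/measurable_EFinP; exact: measurable_indic (measurable_cell _ _).
rewrite integral_indic //; last exact: measurable_cell.
have -> : cell n.+1 i `&` `]0, v] = `[0, v] `&` cell n.+1 i.
  apply/seteqP; split => t /= [+ +]; rewrite /= !in_itv /=.
    by move=> cit /andP[_ ->]; rewrite (ltW (cell_gt0 cit)).
  by move=> /andP[_ ->] cit; rewrite (cell_gt0 cit).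
by rewrite EFinM -lebesgue_measure_Icc0_cell.
Qed.

End cell_index.

Section empirical_kernel.
Variables (R : realType) (n : nat) (s1 s2 : {perm 'I_n.+1}).
Local Notation lam := (@lebesgue_measure R).

Definition cell_pair_uniform (i : 'I_n.+1) :=
  (@cell_uniform R n (s1 i) \x @cell_uniform R n (s2 i))%E.

Definition empirical_kernel (t : R) : {measure set (R * R)%type -> \bar R} :=
  cell_pair_uniform (cell_index n t).

Lemma measurable_empirical_kernel U :
  measurable U -> measurable_fun [set: R] (fun t => empirical_kernel t U).
Proof.
by move=> _; exact: (measurable_fun_cell_index (fun i => cell_pair_uniform i U)).
Qed.

HB.instance Definition _ := isKernel.Build _ _ R (R * R)%type R
  empirical_kernel measurable_empirical_kernel.

Lemma empirical_kernel_setT t : empirical_kernel t setT = 1%E.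
Proof. exact: probability_setT. Qed.

HB.instance Definition _ := Kernel_isProbability.Build _ _ R (R * R)%type R
  empirical_kernel empirical_kernel_setT.

Lemma empirical_kernel_rect (u1 u2 t : R) :
  empirical_kernel t (`[0, u1] `*` `[0, u2]) =
  (n.+1%:R * cellR n.+1 (s1 (cell_index n t)) u1 *
   (n.+1%:R * cellR n.+1 (s2 (cell_index n t)) u2))%:E.
Proof.
rewrite /empirical_kernel /cell_pair_uniform /= product_measure1E //.
by rewrite EFinM -!cell_uniform_Icc0.
Qed.

Lemma F13_empirical_kernel (u t : R) :
  F13 empirical_kernel u t = n.+1%:R * cellR n.+1 (s1 (cell_index n t)) u.
Proof. by rewrite /F13 empirical_kernel_rect /= cellR1 // mulr1. Qed.

Lemma F23_empirical_kernel (u t : R) :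
  F23 empirical_kernel u t = n.+1%:R * cellR n.+1 (s2 (cell_index n t)) u.
Proof. by rewrite /F23 empirical_kernel_rect /= cellR1 // mul1r. Qed.

Lemma empirical_kernel_rectE (u1 u2 t : R) :
  empirical_kernel t (`[0, u1] `*` `[0, u2]) =
  (F13 empirical_kernel u1 t * F23 empirical_kernel u2 t)%:E.
Proof.
by rewrite empirical_kernel_rect F13_empirical_kernel F23_empirical_kernel.
Qed.

Lemma empirical_copula_integral (u1 u2 v : R) : 0 <= v <= 1 ->
  (empirical_copula s1 s2 u1 u2 v)%:E =
  (\int[lam]_(t in Icc 0 v)
     (F13 empirical_kernel u1 t * F23 empirical_kernel u2 t)%:E)%E.
Proof.
move=> v01; under eq_integral do rewrite F13_empirical_kernel F23_empirical_kernel.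
rewrite (@integral_cell_index _ _ (fun i => n.+1%:R * cellR n.+1 (s1 i) u1 *
   (n.+1%:R * cellR n.+1 (s2 i) u2))) //; last first.
  by move=> i; rewrite !mulr_ge0 ?cellR_ge0.
congr (_%:E); rewrite /empirical_copula mulr_sumr; apply: eq_bigr => i _; ring.
Qed.

Lemma continuous_F13_empirical_kernel t : continuous (F13 empirical_kernel ^~ t).
Proof.
have -> : F13 empirical_kernel ^~ t =
    fun u => n.+1%:R * cellR n.+1 (s1 (cell_index n t)) u.
  by apply/funext => u; rewrite F13_empirical_kernel.
by move=> u; apply: cvgM; [exact: cvg_cst | exact: continuous_cellR].
Qed.

Lemma continuous_F23_empirical_kernel t : continuous (F23 empirical_kernel ^~ t).
Proof.
have -> : F23 empirical_kernel ^~ t =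
    fun u => n.+1%:R * cellR n.+1 (s2 (cell_index n t)) u.
  by apply/funext => u; rewrite F23_empirical_kernel.
by move=> u; apply: cvgM; [exact: cvg_cst | exact: continuous_cellR].
Qed.

End empirical_kernel.

Lemma copula2_product (R : realType) : copula2 (fun x y : R => x * y).
Proof.
split=> [x _|x _|x1 x2 y1 y2 _ le_x12 _ _ le_y12 _]; first by rewrite mulr0 mul0r.
  by rewrite mulr1 mul1r.
have -> : x2 * y2 - x2 * y1 - x1 * y2 + x1 * y1 = (x2 - x1) * (y2 - y1) by ring.
by rewrite mulr_ge0 // subr_ge0.
Qed.

Theorem theorem3p6 (R : realType) (n : nat) (s1 s2 : {perm 'I_n}) :
  (0 < n)%N -> simplified (@empirical_copula R n s1 s2).
Proof.
case: n s1 s2 => [//|n] s1 s2 _.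
exists (empirical_kernel s1 s2); split.
- move=> u1 u2 v _ _ v01; rewrite empirical_copula_integral //.
  by apply: eq_integral => t _; rewrite empirical_kernel_rectE.
- exists (fun x y : R => x * y); split; first exact: copula2_product.
  by move=> u1 u2 v _ _ v01; rewrite empirical_copula_integral.
- apply: aeW => t _; split; apply: continuous_subspaceT.
  + exact: continuous_F13_empirical_kernel.
  + exact: continuous_F23_empirical_kernel.
Qed.
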